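(* On $\mathbb{R}^3$ with coordinates $(x,y,z)$ (the universal cover of the isometry group $E(2)$ of the Euclidean plane, with its left-invariant structure), consider the Lorentzian metric $$g_1 = (\sin y\,dx + \cos y\,dz)^2 + dy^2 - (\cos y\,dx - \sin y\,dz)^2 .$$ Let $F_1 = \sin y\,\partial_x + \cos y\,\partial_z$, $F_2 = \partial_y$, $F_3 = \cos y\,\partial_x - \sin y\,\partial_z$, and let $$X = 2(z\cos y + x\sin y)\,F_1 + 2(x\cos y - z\sin y)\,F_3 .$$ Then $$2\,\mathrm{Ric}[g_1] + L_X g_1 - 4\,g_1 = 0 ,$$ and there is no smooth function $f$ on $\mathbb{R}^3$ with $X = \nabla f$ (gradient with respect to $g_1$). Hence $g_1$ is a shrinking non-gradient Lorentzian Ricci soliton.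
   Context: For a pseudo-Riemannian metric $g$ on a manifold $M$, a vector field $X$ and a constant $\alpha$, $(M,g,X,\alpha)$ is a Ricci soliton structure if $2\,\mathrm{Ric}[g] + L_X g + \alpha g = 0$, where $L_X$ denotes the Lie derivative. The soliton is called shrinking, steady, or expanding according as $\alpha<0$, $\alpha=0$, or $\alpha>0$. It is called gradient if $X=\nabla f$ for some function $f$, and non-gradient if $X\neq \nabla f$ for every function $f$. *)

From Stdlib Require Import Reals Lra ClassicalEpsilon.
Open Scope R_scope.

Definition pt : Type := (R * R * R)%type.
Inductive idx : Type := I0 | I1 | I2.

Definition coord (i : idx) (p : pt) : R :=
  match p with (x, y, z) =>
    match i with I0 => x | I1 => y | I2 => z end end.

Definition upd (p : pt) (i : idx) (t : R) : pt :=
  match p with (x, y, z) =>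
    match i with I0 => (t, y, z) | I1 => (x, t, z) | I2 => (x, y, t) end end.

Definition sum3 (f : idx -> R) : R := f I0 + f I1 + f I2.

Definition has_pd (i : idx) (f : pt -> R) (p : pt) (l : R) : Prop :=
  derivable_pt_lim (fun t => f (upd p i t)) (coord i p) l.

(** The partial derivative as a function (the value whenever it exists). *)
Definition pd (i : idx) (f : pt -> R) (p : pt) : R :=
  epsilon (inhabits 0) (fun l => has_pd i f p l).

Fixpoint Ck (n : nat) (f : pt -> R) : Prop :=
  match n with
  | O => forall p : pt, forall eps, eps > 0 -> exists delta, delta > 0 /\
           forall q : pt, (forall i, Rabs (coord i q - coord i p) < delta) ->
             Rabs (f q - f p) < eps
  | S m => (forall p : pt, forall eps, eps > 0 -> exists delta, delta > 0 /\
           forall q : pt, (forall i, Rabs (coord i q - coord i p) < delta) ->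
             Rabs (f q - f p) < eps) /\
           forall i : idx, exists g : pt -> R,
             (forall p, has_pd i f p (g p)) /\ Ck m g
  end.
Definition smooth (f : pt -> R) : Prop := forall n, Ck n f.

Definition sym2 : Type := idx -> idx -> pt -> R.
Definition vfield : Type := idx -> pt -> R.

Definition m3det (a : idx -> idx -> R) : R :=
  a I0 I0 * (a I1 I1 * a I2 I2 - a I1 I2 * a I2 I1)
  - a I0 I1 * (a I1 I0 * a I2 I2 - a I1 I2 * a I2 I0)
  + a I0 I2 * (a I1 I0 * a I2 I1 - a I1 I1 * a I2 I0).

Definition nxt (i : idx) : idx := match i with I0 => I1 | I1 => I2 | I2 => I0 end.
Definition nxt2 (i : idx) : idx := nxt (nxt i).

(* (i,j) entry of the inverse: cofactor C_{ji} / det *)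
Definition m3inv (a : idx -> idx -> R) (i j : idx) : R :=
  (a (nxt j) (nxt i) * a (nxt2 j) (nxt2 i)
   - a (nxt j) (nxt2 i) * a (nxt2 j) (nxt i)) / m3det a.

Definition ginv (g : sym2) (i j : idx) (p : pt) : R :=
  m3inv (fun a b => g a b p) i j.

Definition christoffel (g : sym2) (k i j : idx) (p : pt) : R :=
  / 2 * sum3 (fun l => ginv g k l p *
     (pd i (g j l) p + pd j (g i l) p - pd l (g i j) p)).

Definition ricci (g : sym2) (i j : idx) (p : pt) : R :=
  sum3 (fun k => pd k (christoffel g k i j) p)
  - sum3 (fun k => pd j (christoffel g k i k) p)
  + sum3 (fun k => sum3 (fun l =>
        christoffel g k k l p * christoffel g l i j p
      - christoffel g k j l p * christoffel g l i k p)).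

Definition lie_g (X : vfield) (g : sym2) (i j : idx) (p : pt) : R :=
  sum3 (fun k => X k p * pd k (g i j) p
                 + g k j p * pd i (X k) p
                 + g i k p * pd j (X k) p).

Definition grad (g : sym2) (f : pt -> R) (i : idx) (p : pt) : R :=
  sum3 (fun j => ginv g i j p * pd j f p).

Definition ricci_soliton (g : sym2) (X : vfield) (alpha : R) : Prop :=
  forall i j p, 2 * ricci g i j p + lie_g X g i j p + alpha * g i j p = 0.

Definition shrinking (alpha : R) : Prop := alpha < 0.

Definition non_gradient (g : sym2) (X : vfield) : Prop :=
  ~ exists f : pt -> R, smooth f /\ forall i p, X i p = grad g f i p.

(** The specific data. y = coord I1. Coframe components (dx,dy,dz). *)
Definition theta1 (i : idx) (p : pt) : R :=
  match i with I0 => sin (coord I1 p) | I1 => 0 | I2 => cos (coord I1 p) end.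
Definition theta2 (i : idx) (p : pt) : R :=
  match i with I0 => 0 | I1 => 1 | I2 => 0 end.
Definition theta3 (i : idx) (p : pt) : R :=
  match i with I0 => cos (coord I1 p) | I1 => 0 | I2 => - sin (coord I1 p) end.

Definition g1 : sym2 := fun i j p =>
  theta1 i p * theta1 j p + theta2 i p * theta2 j p - theta3 i p * theta3 j p.

Definition F1 : vfield := fun i p =>
  match i with I0 => sin (coord I1 p) | I1 => 0 | I2 => cos (coord I1 p) end.
Definition F2 : vfield := fun i p =>
  match i with I0 => 0 | I1 => 1 | I2 => 0 end.
Definition F3 : vfield := fun i p =>
  match i with I0 => cos (coord I1 p) | I1 => 0 | I2 => - sin (coord I1 p) end.

Definition Xsol : vfield := fun i p =>
  let x := coord I0 p in let y := coord I1 p in let z := coord I2 p in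
  2 * (z * cos y + x * sin y) * F1 i p + 2 * (x * cos y - z * sin y) * F3 i p.

From Stdlib Require Import Reals Lra ClassicalEpsilon FunctionalExtensionality.
Open Scope R_scope.

(** Write θ1 = sin y dx + cos y dz, θ2 = dy, θ3 = cos y dx - sin y dz, so that
    g1 = θ1² + θ2² - θ3².  Since dθ1/dy = θ3 and dθ3/dy = -θ1, the only
    non-zero partial derivatives of g1 are d_y g1 = 2 (θ1 θ3 + θ3 θ1), and the
    coordinate matrix of g1 is its own inverse (it has determinant -1).  With
    these two facts the Christoffel symbols have an explicit closed form, and a
    direct computation gives
         Ric[g1] = 2 dy²        and        L_X g1 = 4 (θ1² - θ3²),
    whence 2 Ric[g1] + L_X g1 - 4 g1 = 0.

    For the non-gradient part, lowering the index of X = grad f (again using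
    that g1 is self-inverse) gives df = X♭ with
         X♭ = 2 (z sin 2y - x cos 2y) dx + 2 (z cos 2y + x sin 2y) dz.
    Hence f is constant in y, while d f(t,0,0)/dt = -2t and
    d f(t,π/2,0)/dt = 2t; integrating over t ∈ [0,1] by the mean value theorem
    gives f(1,0,0) - f(0,0,0) = -1 and = +1 at the same time. *)

Lemma pd_of_has_pd i f p l : has_pd i f p l -> pd i f p = l.
Proof.
  intro H. unfold pd.
  assert (Hex : exists l, has_pd i f p l) by (exists l; exact H).
  exact (uniqueness_limite _ _ _ _ (epsilon_spec (inhabits 0) _ Hex) H).
Qed.

Lemma has_pd_of_Ck1 f : Ck 1 f -> forall i p, has_pd i f p (pd i f p).
Proof.
  intros [_ Hd] i p. destruct (Hd i) as [g [Hg _]].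
  rewrite (pd_of_has_pd _ _ _ _ (Hg p)). apply Hg.
Qed.

Lemma derivable_pt_lim_eq f x l l' :
  derivable_pt_lim f x l' -> l' = l -> derivable_pt_lim f x l.
Proof. intros H <-; exact H. Qed.

Lemma const_of_null_derivative h a b :
  a < b -> (forall t, derivable_pt_lim h t 0) -> h b = h a.
Proof.
  intros Hab Hh.
  destruct (MVT_cor2 h (fun _ => 0) a b Hab (fun t _ => Hh t)) as [c [Hc _]]. lra.
Qed.

Lemma increment_of_linear_derivative h c :
  (forall t, derivable_pt_lim h t (c * t)) -> h 1 - h 0 = c / 2.
Proof.
  intro Hh.
  assert (H : h 1 - c / 2 * (1 * 1) = h 0 - c / 2 * (0 * 0)).
  { apply (const_of_null_derivative (fun t => h t - c / 2 * (t * t)) 0 1); [lra |].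
    intro t. eapply derivable_pt_lim_eq.
    - apply (derivable_pt_lim_minus h); [apply Hh |].
      apply derivable_pt_lim_scal, derivable_pt_lim_mult; apply derivable_pt_lim_id.
    - unfold id. field. }
  lra.
Qed.

Ltac derive :=
  lazymatch goal with
  | |- derivable_pt_lim (fun _ => ?c) _ _ => apply (derivable_pt_lim_const c)
  | |- derivable_pt_lim (fun t => t) _ _ => apply derivable_pt_lim_id
  | |- derivable_pt_lim (fun t => @?A t + @?B t) _ _ =>
      apply (derivable_pt_lim_plus A B); derive
  | |- derivable_pt_lim (fun t => @?A t - @?B t) _ _ =>
      apply (derivable_pt_lim_minus A B); derive
  | |- derivable_pt_lim (fun t => @?A t * @?B t) _ _ =>
      apply (derivable_pt_lim_mult A B); derive
  | |- derivable_pt_lim (fun t => - @?A t) _ _ =>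
      apply (derivable_pt_lim_opp A); derive
  | |- derivable_pt_lim (fun t => sin (@?A t)) _ _ =>
      apply (derivable_pt_lim_comp A sin); [derive | apply derivable_pt_lim_sin]
  | |- derivable_pt_lim (fun t => cos (@?A t)) _ _ =>
      apply (derivable_pt_lim_comp A cos); [derive | apply derivable_pt_lim_cos]
  end.

(** The partial derivatives d_k g1_ij: only d_y is non-zero, and it equals
    2 (θ1 ⊗ θ3 + θ3 ⊗ θ1) because dθ1/dy = θ3 and dθ3/dy = -θ1. *)
Definition dg1 (k i j : idx) (p : pt) : R :=
  match k with
  | I1 => 2 * (theta1 i p * theta3 j p + theta3 i p * theta1 j p)
  | _ => 0 end.

Definition Gamma1 (k i j : idx) (p : pt) : R :=
  / 2 * sum3 (fun l => g1 k l p * (dg1 i j l p + dg1 j i l p - dg1 l i j p)).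

(** The 1-form X♭ = g1(X, -), written with the double-angle functions. *)
Definition Xflat (i : idx) (p : pt) : R :=
  let x := coord I0 p in let y := coord I1 p in let z := coord I2 p in
  match i with
  | I0 => 2 * (z * sin (2 * y) - x * cos (2 * y))
  | I1 => 0
  | I2 => 2 * (z * cos (2 * y) + x * sin (2 * y)) end.

Ltac unfold_data :=
  cbv beta iota zeta delta [upd coord sum3 nxt nxt2 g1 theta1 theta2 theta3
                            Xsol F1 F2 F3 dg1 Gamma1].

Ltac compute_pd :=
  match goal with |- context [pd ?i ?f ?p] =>
    let H := fresh in
    eassert (H : has_pd i f p _) by (unfold has_pd; unfold_data; derive);
    rewrite (pd_of_has_pd _ _ _ _ H); clear H
  end.

Lemma pd_g1 k i j p : pd k (g1 i j) p = dg1 k i j p.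
Proof.
  destruct p as [[x y] z]; apply pd_of_has_pd; unfold has_pd.
  destruct k, i, j; unfold_data;
    (eapply derivable_pt_lim_eq; [derive | cbv beta; ring]).
Qed.

Lemma det_g1 p : m3det (fun a b => g1 a b p) = -1.
Proof.
  destruct p as [[x y] z]. pose proof (cos2 y) as Hc. unfold Rsqr in Hc.
  unfold m3det. unfold_data. ring [Hc].
Qed.

Lemma ginv_g1 i j p : ginv g1 i j p = g1 i j p.
Proof.
  unfold ginv, m3inv. rewrite det_g1. destruct p as [[x y] z].
  pose proof (cos2 y) as Hc. unfold Rsqr in Hc.
  destruct i, j; unfold_data; field [Hc].
Qed.

Lemma christoffel_g1 : christoffel g1 = Gamma1.
Proof.
  do 4 (apply functional_extensionality; intro).
  unfold christoffel, Gamma1, sum3. rewrite !ginv_g1, !pd_g1. reflexivity.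
Qed.

Lemma ricci_g1 i j p : ricci g1 i j p = 2 * theta2 i p * theta2 j p.
Proof.
  destruct p as [[x y] z]. pose proof (cos2 y) as Hc. unfold Rsqr in Hc.
  unfold ricci, sum3. rewrite christoffel_g1.
  destruct i, j; repeat compute_pd; unfold_data; field [Hc].
Qed.

Lemma lie_Xsol_g1 i j p :
  lie_g Xsol g1 i j p = 4 * (theta1 i p * theta1 j p - theta3 i p * theta3 j p).
Proof.
  destruct p as [[x y] z]. pose proof (cos2 y) as Hc. unfold Rsqr in Hc.
  unfold lie_g, sum3. rewrite !pd_g1.
  destruct i, j; repeat compute_pd; unfold_data; ring [Hc].
Qed.

Lemma soliton_identity i j p :
  2 * ricci g1 i j p + lie_g Xsol g1 i j p - 4 * g1 i j p = 0.
Proof. rewrite ricci_g1, lie_Xsol_g1. unfold g1. ring. Qed.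

Lemma grad_g1_lower V f p :
  (forall i, V i p = grad g1 f i p) ->
  forall i, pd i f p = sum3 (fun j => g1 i j p * V j p).
Proof.
  intros HV i. unfold sum3. rewrite !HV. unfold grad, sum3. rewrite !ginv_g1.
  destruct p as [[x y] z]. pose proof (cos2 y) as Hc. unfold Rsqr in Hc.
  destruct i; unfold_data; ring [Hc].
Qed.

Lemma Xsol_flat i p : sum3 (fun j => g1 i j p * Xsol j p) = Xflat i p.
Proof.
  destruct p as [[x y] z]. pose proof (cos2 y) as Hc. unfold Rsqr in Hc.
  unfold Xflat. rewrite sin_2a, cos_2a.
  destruct i; unfold_data; ring [Hc].
Qed.

(** X♭ is not exact: a potential f would increase by -1 along [0,1]×{0}×{0}
    and by +1 along [0,1]×{π/2}×{0}, yet be constant in y. *)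
Lemma nongradient_Xsol : non_gradient g1 Xsol.
Proof.
  intros [f [Hsmooth Hgrad]].
  assert (Hdf : forall i p, has_pd i f p (Xflat i p)).
  { intros i p. rewrite <- Xsol_flat, <- (grad_g1_lower Xsol f p (fun i => Hgrad i p)).
    exact (has_pd_of_Ck1 f (Hsmooth 1%nat) i p). }
  assert (Hline0 : f (1, 0, 0) - f (0, 0, 0) = -2 / 2).
  { apply (increment_of_linear_derivative (fun t => f (t, 0, 0))). intro t.
    eapply derivable_pt_lim_eq; [exact (Hdf I0 (t, 0, 0)) |].
    unfold Xflat; simpl coord. rewrite Rmult_0_r, sin_0, cos_0. ring. }
  assert (Hline1 : f (1, PI / 2, 0) - f (0, PI / 2, 0) = 2 / 2).
  { apply (increment_of_linear_derivative (fun t => f (t, PI / 2, 0))). intro t.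
    eapply derivable_pt_lim_eq; [exact (Hdf I0 (t, PI / 2, 0)) |].
    unfold Xflat; simpl coord. replace (2 * (PI / 2)) with PI by field.
    rewrite sin_PI, cos_PI. ring. }
  assert (Hy : forall x, f (x, PI / 2, 0) = f (x, 0, 0)).
  { intro x. apply (const_of_null_derivative (fun t => f (x, t, 0))); [exact PI2_RGT_0 |].
    intro t. exact (Hdf I1 (x, t, 0)). }
  rewrite !Hy in Hline1. lra.
Qed.

Theorem theorem4p1 :
  (forall i j p, 2 * ricci g1 i j p + lie_g Xsol g1 i j p - 4 * g1 i j p = 0) /\
  ricci_soliton g1 Xsol (-4) /\ shrinking (-4) /\ non_gradient g1 Xsol.
Proof.
  split; [exact soliton_identity |].
  split; [| split; [unfold shrinking; lra | exact nongradient_Xsol]].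
  intros i j p. pose proof (soliton_identity i j p). lra.
Qed.
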